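(* Let $B_1,B_2$ be compact curves of genus at least two, $g$ the genus of $B_2$, and let $\mathcal A=(D_1\cup\dots\cup D_{m+1},d,\{(t_i,r_i,n_i)\}_{i=1}^{m+1})$ be a simple Galois admissible configuration for $B_1\times B_2$ with $m\le4(g-1)$. Let $\mathcal A'=(D_1\cup\dots\cup D_m,d,\{(t_i,r_i,n_i)\}_{i=1}^{m})$ be obtained by omitting the last component. Then $\nu(\mathcal A')<\nu(\mathcal A)$.
   Context: A simple Galois admissible configuration for $B_1\times B_2$ consists of: pairwise disjoint curves $D_1,\dots,D_k\subset B_1\times B_2$, each the graph of an étale map $B_1\to B_2$; a positive integer $d$; and for each $i$ positive integers $t_i,n_i$ and $r_i\ge2$ with $d=t_in_ir_i$. Its abstract slope is $$\nu(\mathcal A)=2+\frac{-\sum_{i=1}^k t_in_i\frac{(r_i-1)(r_i+1)}{r_i}e(D_i)}{d\,e(B_1\times B_2)-\sum_{i=1}^k t_in_i(r_i-1)e(D_i)},$$ where $e$ denotes topological Euler characteristic; equivalently $\nu(\mathcal A)=2+\dfrac{1-\frac1k\sum_i r_i^{-2}}{\frac{2g-2}{k}+1-\frac1k\sum_i r_i^{-1}}$ with $g$ the genus of $B_2$. *)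

From mathcomp Require Import all_boot all_order all_algebra.
Set Implicit Arguments. Unset Strict Implicit. Unset Printing Implicit Defensive.
Import Order.TTheory GRing.Theory Num.Theory.
Local Open Scope ring_scope.

Definition euler_curve (g : nat) : int := 2%:Z - (2 * g)%:Z.

(* Numerical data of a simple Galois admissible configuration for B1 x B2,
   with g1, g2 the genera of B1, B2, k components D_0,...,D_(k-1),
   eD i = e(D_i).  Each D_i is the graph of an etale map B1 -> B2, hence
   D_i is isomorphic to B1 (eD i = e(B1)) and, by Riemann-Hurwitz for an
   etale map of some degree deg >= 1, e(B1) = deg * e(B2). *)
Definition sga_config (g1 g2 k d : nat) (t n r : nat -> nat) (eD : nat -> int)
  : Prop :=
  (0 < d)%N /\
  forall i, (i < k)%N ->
    [/\ d = (t i * n i * r i)%N, (0 < t i)%N, (0 < n i)%N & (2 <= r i)%N] /\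
    eD i = euler_curve g1 /\
        (exists2 deg : nat, (0 < deg)%N & euler_curve g1 = (deg%:Z * euler_curve g2)%R).

(* Abstract slope nu(A), first formula of the paper, with
   e(B1 x B2) = e(B1) e(B2). *)
Definition abstract_slope (g1 g2 k d : nat) (t n r : nat -> nat) (eD : nat -> int)
  : rat :=
  let eX : rat := ((euler_curve g1)%:~R * (euler_curve g2)%:~R) in
  2 + (- \sum_(i < k) ((t i * n i)%:R
                       * ((((r i)%:R - 1) * ((r i)%:R + 1)) / (r i)%:R)
                       * (eD i)%:~R))
      / (d%:R * eX - \sum_(i < k) ((t i * n i)%:R * ((r i)%:R - 1) * (eD i)%:~R)).

From mathcomp Require Import all_boot all_order all_algebra.
From mathcomp Require Import ring lra zify.
Set Implicit Arguments. Unset Strict Implicit. Unset Printing Implicit Defensive.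
Import Order.TTheory GRing.Theory Num.Theory.
Local Open Scope ring_scope.

(* Cancelling d e(B1) turns nu(A) into 2 + S2 / (2g - 2 + S1) with
   S2 = sum (1 - r_i^-2) and S1 = sum (1 - r_i^-1).  With u = 1/r_i, each
   summand of S2 exceeds that of S1 by u - u^2 <= 1/4, so m <= 4(g - 1) forces
   the ratio for A' below 1, while the added component contributes a term of
   ratio (1 - u^2) / (1 - u) = 1 + u >= 1; the mediant inequality concludes. *)

Lemma ltr_mediant (R : numFieldType) (a b c d : R) :
  0 < b -> 0 < d -> a / b < c / d -> a / b < (a + c) / (b + d).
Proof.
move=> b_gt0 d_gt0; rewrite !ltr_pdivrMr // => lt_ac.
rewrite mulrAC ltr_pdivlMr ?addr_gt0 // mulrDr mulrDl ltrD2l.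
by rewrite mulrAC ltr_pdivlMr in lt_ac.
Qed.

Lemma natr_inv_le1 (R : numFieldType) (n : nat) : n%:R^-1 <= 1 :> R.
Proof. by case: n => [|n]; rewrite ?invr0 ?ler01 // invf_le1 ?ler1n ?ltr0n. Qed.

Lemma natr_inv_lt1 (R : numFieldType) (n : nat) : (1 < n)%N -> n%:R^-1 < 1 :> R.
Proof. by move=> n_gt1; rewrite invf_lt1 ?ltr1n // ltr0n ltnW. Qed.

Lemma euler_curveE (R : pzRingType) (g : nat) : (euler_curve g)%:~R = 2 - 2 * g%:R :> R.
Proof. by rewrite /euler_curve rmorphB /= -!pmulrn natrM. Qed.

Lemma sga_config_le (g1 g2 k k' d : nat) (t n r : nat -> nat) (eD : nat -> int) :
  (k' <= k)%N -> sga_config g1 g2 k d t n r eD -> sga_config g1 g2 k' d t n r eD.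
Proof. by move=> le_k [d_gt0 cfg]; split=> // i lt_i; apply/cfg/(leq_trans lt_i). Qed.

Definition slope_num (k : nat) (r : nat -> nat) : rat :=
  \sum_(i < k) (1 - (r i)%:R^-2).

Definition slope_den (g2 k : nat) (r : nat -> nat) : rat :=
  - (euler_curve g2)%:~R + \sum_(i < k) (1 - (r i)%:R^-1).

Lemma slope_numS (k : nat) (r : nat -> nat) :
  slope_num k.+1 r = slope_num k r + (1 - (r k)%:R^-2).
Proof. by rewrite /slope_num big_ord_recr. Qed.

Lemma slope_denS (g2 k : nat) (r : nat -> nat) :
  slope_den g2 k.+1 r = slope_den g2 k r + (1 - (r k)%:R^-1).
Proof. by rewrite /slope_den big_ord_recr addrA. Qed.

Lemma abstract_slopeE (g1 g2 k d : nat) (t n r : nat -> nat) (eD : nat -> int) :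
  euler_curve g1 != 0 -> sga_config g1 g2 k d t n r eD ->
  abstract_slope g1 g2 k d t n r eD = 2 + slope_num k r / slope_den g2 k r.
Proof.
move=> eB1_neq0 [d_gt0 cfg].
set E : rat := (euler_curve g1)%:~R.
have dE_neq0 : d%:R * E != 0 by rewrite mulf_neq0 ?pnatr_eq0 ?intr_eq0 -?lt0n.
have cfgE (i : 'I_k) :
    [/\ (t i * n i)%:R = d%:R / (r i)%:R :> rat, (eD i)%:~R = E & (r i)%:R != 0 :> rat].
  have [[-> _ _ r_gt1] [-> _]] := cfg i (ltn_ord i).
  have r_neq0 : (r i)%:R != 0 :> rat by rewrite pnatr_eq0 -lt0n ltnW.
  by split=> //; rewrite [in RHS]natrM mulfK.
have num_eq : \sum_(i < k) ((t i * n i)%:R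
                 * ((((r i)%:R - 1) * ((r i)%:R + 1)) / (r i)%:R) * (eD i)%:~R)
              = d%:R * E * slope_num k r.
  rewrite /slope_num mulr_sumr; apply: eq_bigr => i _.
  by have [-> -> r_neq0] := cfgE i; field.
have den_eq : \sum_(i < k) ((t i * n i)%:R * ((r i)%:R - 1) * (eD i)%:~R)
              = d%:R * E * \sum_(i < k) (1 - (r i)%:R^-1).
  rewrite mulr_sumr; apply: eq_bigr => i _.
  by have [-> -> r_neq0] := cfgE i; field.
rewrite /abstract_slope num_eq den_eq -/E /slope_den.
set S := \sum_(i < k) _; set e2 : rat := (euler_curve g2)%:~R.
have -> : d%:R * (E * e2) - d%:R * E * S = - (d%:R * E) * (- e2 + S) by ring.
by rewrite -mulNr -mulf_div divff ?oppr_eq0 // mul1r.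
Qed.

Lemma slope_num_ge0 (k : nat) (r : nat -> nat) : 0 <= slope_num k r.
Proof. by apply: sumr_ge0 => i _; rewrite subr_ge0 -natrX natr_inv_le1. Qed.

Lemma slope_num_lt_den (g2 m : nat) (r : nat -> nat) :
  (2 <= g2)%N -> (m <= 4 * (g2 - 1))%N -> slope_num m r < slope_den g2 m r.
Proof.
move=> g2_ge2 m_le.
have term_le (u : rat) : 1 - u ^+ 2 <= (1 - u) + 4^-1.
  by have := sqr_ge0 (u - 2^-1); rewrite expr2; nra.
have num_le : slope_num m r <= \sum_(i < m) (1 - (r i)%:R^-1) + 4^-1 * m%:R.
  rewrite mulr_natr -[in _ *+ m](card_ord m) -sumr_const -big_split /=.
  by apply: ler_sum => i _; rewrite -exprVn term_le.
have := m_le; rewrite -(ler_nat rat) natrM natrB ?(ltnW g2_ge2) // => m_le_rat.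
have : (2 <= g2%:R :> rat) by rewrite ler_nat.
rewrite /slope_den euler_curveE; lra.
Qed.

Lemma sub1_sqr_div (F : fieldType) (x : F) : x != 1 -> (1 - x ^+ 2) / (1 - x) = 1 + x.
Proof.
move=> x_neq1; rewrite -[X in X - _](expr1n _ 2) subr_sqr mulrC mulKf //.
by rewrite subr_eq0 eq_sym.
Qed.

Theorem lemma5p7 (g1 g2 m d : nat) (t n r : nat -> nat) (eD : nat -> int) :
  (2 <= g1)%N -> (2 <= g2)%N ->
  sga_config g1 g2 m.+1 d t n r eD ->
  (m <= 4 * (g2 - 1))%N ->
  abstract_slope g1 g2 m d t n r eD < abstract_slope g1 g2 m.+1 d t n r eD.
Proof.
move=> g1_ge2 g2_ge2 cfg m_le.
have eB1_neq0 : euler_curve g1 != 0 by rewrite /euler_curve; lia.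
have [_ /(_ m (ltnSn m)) [[_ _ _ rm_gt1] _]] := cfg.
rewrite (abstract_slopeE eB1_neq0 cfg).
rewrite (abstract_slopeE eB1_neq0 (sga_config_le (leqnSn m) cfg)) ltrD2l slope_numS slope_denS.
have num_lt_den := slope_num_lt_den r g2_ge2 m_le.
have den_gt0 := le_lt_trans (slope_num_ge0 m r) num_lt_den.
apply: ltr_mediant => //; first by rewrite subr_gt0 natr_inv_lt1.
apply: (@lt_le_trans _ _ 1); first by rewrite ltr_pdivrMr // mul1r.
by rewrite -exprVn sub1_sqr_div ?lt_eqF ?natr_inv_lt1 // lerDl invr_ge0.
Qed.
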